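(* Let $d, n \in \mathbb{N}$ and let $k$ be an integer with $0 \leq k \leq d$. The minimum number of $k$-dimensional affine subspaces of $\mathbb{R}^d$ whose union contains the lattice cube $\{0,\ldots,n-1\}^d$ is $n^{d-k}$.
   Context: The lattice cube $\{0,\ldots,n-1\}^d$ is viewed as a subset of $\mathbb{R}^d$. *)

From HB Require Import structures.
From mathcomp Require Import all_boot all_order all_algebra.
From mathcomp Require Import reals.
Set Implicit Arguments. Unset Strict Implicit. Unset Printing Implicit Defensive.
Import Order.TTheory GRing.Theory Num.Theory.
Local Open Scope ring_scope.

Definition in_lattice_cube (R : realType) (d n : nat) (x : 'rV[R]_d) : Prop :=
  forall i : 'I_d, exists m : nat, (m < n)%N /\ x ord0 i = m%:R.

Definition affine_subspace (R : realType) (d : nat)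
  (p : 'rV[R]_d) (V : {vspace 'rV[R]_d}) : 'rV[R]_d -> Prop :=
  fun x => (x - p) \in V.

Definition covers_cube_by (R : realType) (d n k m : nat) : Prop :=
  exists (p : 'I_m -> 'rV[R]_d) (V : 'I_m -> {vspace 'rV[R]_d}),
    (forall j, \dim (V j) = k) /\
    (forall x, in_lattice_cube n x -> exists j, affine_subspace (p j) (V j) x).

From HB Require Import structures.
From mathcomp Require Import all_boot all_order all_algebra.
From mathcomp Require Import reals.
Set Implicit Arguments. Unset Strict Implicit. Unset Printing Implicit Defensive.
Import Order.TTheory GRing.Theory Num.Theory.
Local Open Scope ring_scope.

(* A k-dimensional affine subspace p + V meets the grid {0..n-1}^d in at most
   n^k points: some k coordinates determine the vectors of V, so restricting
   the grid points of p + V to these coordinates is injective.  Hence m such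
   subspaces cover at most m n^k of the n^d grid points, and m >= n^(d-k).
   Conversely, the translates of the span of the first k unit vectors by the
   n^(d-k) choices of the last d - k coordinates cover the cube. *)

Section CoordinateProjection.
Context {F : fieldType} {d : nat}.
Implicit Types (V : {vspace 'rV[F]_d}).

Definition vbasis_mx V : 'M[F]_(\dim V, d) := \matrix_i (vbasis V)`_i.

Lemma row_free_vbasis_mx V : row_free (vbasis_mx V).
Proof.
apply: inj_row_free => c; rewrite mulmx_sum_row => c0.
have /freeP /(_ (c 0)) := basis_free (vbasisP V).
have -> : \sum_i c 0 i *: (vbasis V)`_i = \sum_i c 0 i *: row i (vbasis_mx V).
  by apply: eq_bigr => i _; rewrite rowK.
by move=> /(_ c0) ci0; apply/rowP => i; rewrite ci0 mxE.
Qed.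

Lemma memv_vbasis_mx V v : v \in V -> exists c : 'rV_(\dim V), v = c *m vbasis_mx V.
Proof.
move=> vV; exists (\row_i coord (vbasis V) i v).
rewrite mulmx_sum_row {1}(coord_vbasis vV); apply: eq_bigr => i _.
by rewrite rowK mxE.
Qed.

Lemma vspace_coord_inj V :
  exists f : 'I_(\dim V) -> 'I_d,
    forall v, v \in V -> (forall j, v 0 (f j) = 0) -> v = 0.
Proof.
set M := vbasis_mx V; pose f := maxrankfun M^T; pose N := rowsub f M^T.
have rankMT : \rank M^T = \dim V by rewrite mxrank_tr (eqP (row_free_vbasis_mx V)).
have freeNT : row_free N^T.
  by rewrite /row_free mxrank_tr (eqP (maxrowsub_free _)) rankMT.
exists (fun j => f (cast_ord (esym rankMT) j)) => v /memv_vbasis_mx [c ->] vf0.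
suff -> : c = 0 by rewrite mul0mx.
apply: (row_free_inj freeNT); rewrite mul0mx; apply/rowP => j.
rewrite [RHS]mxE -[RHS](vf0 (cast_ord rankMT j)) cast_ordK !mxE.
by apply: eq_bigr => i _; rewrite !mxE.
Qed.

Definition grid_point (T : Type) (c : T -> F) (g : 'I_d -> T) : 'rV[F]_d :=
  \row_i c (g i).

Lemma card_grid_affine_le (T : finType) (c : T -> F) (p : 'rV[F]_d) V
    (A : {pred {ffun 'I_d -> T}}) :
  injective c -> {in A, forall g : {ffun 'I_d -> T}, grid_point c g - p \in V} ->
  (#|A| <= #|T| ^ \dim V)%N.
Proof.
move=> c_inj AV; have [f fV] := vspace_coord_inj V.
pose restrict (g : {ffun 'I_d -> T}) := [ffun j => g (f j)].
have restrict_inj : {in A &, injective restrict}.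
  move=> g1 g2 g1A g2A /ffunP eq_fg.
  have diffV : grid_point c g1 - grid_point c g2 \in V.
    by rewrite -(subrKA p) -[p - _]opprB; apply: memvB; apply: AV.
  have /rowP diff0 : grid_point c g1 - grid_point c g2 = 0.
    apply: (fV _ diffV) => j; rewrite !mxE.
    by have := eq_fg j; rewrite !ffunE => ->; rewrite subrr.
  apply/ffunP => i; apply: c_inj; apply/eqP.
  by have := diff0 i; rewrite !mxE => /eqP; rewrite subr_eq0.
rewrite -(card_in_imset restrict_inj) (leq_trans (max_card _)) //.
by rewrite card_ffun card_ord.
Qed.

Definition coord_vspace k (f : 'I_k -> 'I_d) : {vspace 'rV[F]_d} :=
  <<[tuple delta_mx 0%R (f i) | i < k]>>%VS.

Lemma dim_coord_vspace k (f : 'I_k -> 'I_d) : injective f -> \dim (coord_vspace f) = k.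
Proof.
move=> f_inj; rewrite /coord_vspace; set X := [tuple _ | i < k].
suff /eqP -> : free X by rewrite size_tuple.
apply/freeP => a sum0 i.
have /rowP /(_ (f i)) := sum0; rewrite summxE (bigD1 i) //= big1 => [|j ji].
  by rewrite nth_mktuple !mxE !eqxx mulr1 addr0.
by rewrite nth_mktuple !mxE eqxx (inj_eq f_inj) eq_sym (negPf ji) mulr0.
Qed.

Lemma memv_coord_vspace k (f : 'I_k -> 'I_d) (w : 'rV[F]_d) :
  (forall b, b \notin codom f -> w 0 b = 0) -> w \in coord_vspace f.
Proof.
move=> w0; rewrite [w]row_sum_delta; apply: memv_suml => b _.
have [/codomP [i ->] | /w0 ->] := boolP (b \in codom f); last by rewrite scale0r mem0v.
apply/memvZ/memv_span; apply/tnthP; exists i; by rewrite tnth_mktuple.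
Qed.

End CoordinateProjection.

Definition lattice_point (R : realType) d n (g : 'I_d -> 'I_n) : 'rV[R]_d :=
  grid_point (fun i : 'I_n => i%:R) g.

Lemma lattice_point_in_cube (R : realType) d n (g : 'I_d -> 'I_n) :
  in_lattice_cube n (lattice_point R g).
Proof. by move=> i; exists (g i); rewrite mxE. Qed.

Lemma lattice_point_of_cube (R : realType) d n (x : 'rV[R]_d) :
  in_lattice_cube n x -> exists g : {ffun 'I_d -> 'I_n}, x = lattice_point R g.
Proof.
move=> x_cube; have /fin_all_exists [g xg] : forall i, exists m : 'I_n, x 0 i = m%:R.
  by move=> i; have [m [mn ->]] := x_cube i; exists (Ordinal mn).
by exists (finfun g); apply/rowP => i; rewrite !mxE ffunE.
Qed.

Lemma covers_cube_by_finType (R : realType) d n k (I : finType)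
    (p : I -> 'rV[R]_d) (V : I -> {vspace 'rV[R]_d}) :
  (forall i, \dim (V i) = k) ->
  (forall x, in_lattice_cube n x -> exists i, affine_subspace (p i) (V i) x) ->
  covers_cube_by R d n k #|I|.
Proof.
move=> dimV cover; exists (p \o enum_val), (V \o enum_val).
split=> [j | x /cover [i xi]]; first exact: dimV.
by exists (enum_rank i); rewrite /= enum_rankK.
Qed.

Lemma covers_cube_by_translates (R : realType) d n k :
  (k <= d)%N -> covers_cube_by R d n k (n ^ (d - k)).
Proof.
move=> le_kd; have E : (k + (d - k))%N = d := subnKC le_kd.
pose free_coord (j : 'I_k) := cast_ord E (lshift (d - k) j).
pose fixed_coord (t : 'I_(d - k)) := cast_ord E (rshift k t).
pose p (h : {ffun 'I_(d - k) -> 'I_n}) : 'rV[R]_d :=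
  \row_i if split (cast_ord (esym E) i) is inr t then (h t)%:R else 0.
have <- : #|{ffun 'I_(d - k) -> 'I_n}| = (n ^ (d - k))%N by rewrite card_ffun !card_ord.
apply: (@covers_cube_by_finType R d n k _ p (fun=> coord_vspace free_coord)).
  by move=> _; apply: dim_coord_vspace => j1 j2 /cast_ord_inj /lshift_inj.
move=> x /lattice_point_of_cube [g ->]; exists [ffun t => g (fixed_coord t)].
apply: memv_coord_vspace => b b_free; rewrite !mxE.
case: splitP => [j bj | t bt].
  by move: b_free; rewrite (_ : b = free_coord j) ?codom_f //; apply: val_inj; exact: bj.
by rewrite ffunE (_ : fixed_coord t = b) ?subrr //; apply: val_inj; exact: esym bt.
Qed.

Lemma covers_cube_by_count (R : realType) d n k m :
  covers_cube_by R d n k m -> (n ^ d <= m * n ^ k)%N.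
Proof.
move=> [p [V [dimV cover]]].
have /fin_all_exists [J J_cover] :
    forall g : {ffun 'I_d -> 'I_n}, exists j, lattice_point R g - p j \in V j.
  by move=> g; apply: cover; apply: lattice_point_in_cube.
have <- : #|{ffun 'I_d -> 'I_n}| = (n ^ d)%N by rewrite card_ffun !card_ord.
rewrite -sum1_card (partition_big J predT) //= -[m in (m * _)%N]card_ord -sum_nat_const.
apply: leq_sum => j _; rewrite sum1_card -(dimV j) -[n in (n ^ _)%N]card_ord.
apply: (@card_grid_affine_le R d 'I_n (fun i : 'I_n => i%:R) (p j) (V j)).
  by move=> i1 i2 /eqP; rewrite eqr_nat => /eqP /val_inj.
by move=> g /eqnP /val_inj <-; have := J_cover g; rewrite /lattice_point.
Qed.

Lemma covers_cube_by_min (R : realType) d n k m :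
  (0 < n)%N -> (k <= d)%N -> covers_cube_by R d n k m -> (n ^ (d - k) <= m)%N.
Proof.
move=> n_gt0 le_kd /covers_cube_by_count.
by rewrite -{1}(subnK le_kd) expnD leq_pmul2r // expn_gt0 n_gt0.
Qed.

Theorem corollary2 (R : realType) (d n k : nat) (hn : (0 < n)%N) (hk : (k <= d)%N) :
  covers_cube_by R d n k (n ^ (d - k)) /\
  (forall m : nat, covers_cube_by R d n k m -> (n ^ (d - k) <= m)%N).
Proof.
split; first exact: covers_cube_by_translates.
by move=> m; apply: covers_cube_by_min.
Qed.
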